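(* Let $\Gamma$ be a positive recursive absorbing game with payoffs in $(0,1]$. For each player $i\in I$ there exists a stationary profile $x_{-i}\in\prod_{j\ne i}\Delta(A_j)$ of the other players such that $\gamma_i(\sigma_i,x_{-i})\le v_i$ for every strategy $\sigma_i\in\Sigma_i$ of player $i$ (i.e., a stationary minmaxing profile against $i$ exists).
   Context: A positive recursive absorbing game is $\Gamma=(I,(A_i)_{i\in I},(r_i)_{i\in I},p)$ with $I$ a finite set of players, $A_i$ finite nonempty action sets, $A=\prod_i A_i$, $r_i:A\to(0,1]$, $p:A\to[0,1]$. At each stage, if not yet absorbed, players choose actions $a^n\in A$; with probability $p(a^n)$ the game absorbs with terminal payoff $r(a^n)$, otherwise continues (payoff $0$ in the nonabsorbing state). $\theta$ is the absorption stage. Behavior strategies $\sigma_i:\bigcup_{n\ge0}A^n\to\Delta(A_i)$ form $\Sigma_i$; $\Sigma_{-i}=\prod_{j\neq i}\Sigma_j$. The undiscounted payoff is $\gamma(\sigma)=\mathbf E_\sigma[r(a^\theta)\mathbf 1_{\theta<\infty}]$. A stationary strategy of player $j$ plays a fixed mixed action $x_j\in\Delta(A_j)$ at every stage regardless of history. Player $i$'s minmax value is $v_i:=\inf_{\sigma_{-i}\in\Sigma_{-i}}\sup_{\sigma_i\in\Sigma_i}\gamma_i(\sigma_i,\sigma_{-i})$. *)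

From HB Require Import structures.
From mathcomp Require Import all_boot all_order all_algebra.
From mathcomp Require Import all_classical all_reals all_analysis.
Unset Printing Implicit Defensive.
Import Order.TTheory GRing.Theory Num.Theory.
Import numFieldNormedType.Exports.
Local Open Scope ring_scope.
Local Open Scope classical_set_scope.

Section AbsorbingGame.
Variables (R : realType) (I : finType) (A : I -> finType).

Definition profile := {dffun forall i, A i}.

Definition is_mixed (T : finType) (m : {ffun T -> R}) : Prop :=
  (forall t, 0 <= m t) /\ \sum_t m t = 1.

(* a behavior strategy of player j: histories (finite sequences of past
   action profiles, in chronological order) -> Delta(A_j) *)
Definition strat (j : I) := seq profile -> {ffun A j -> R}.
Definition is_strat (j : I) (s : strat j) : Prop := forall h, is_mixed (A j) (s h).

Definition sprofile := forall j : I, strat j.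

Definition prob_prof (mu : forall j : I, {ffun A j -> R}) (a : profile) : R :=
  \prod_j mu j (a j).

Variables (r : I -> profile -> R) (p : profile -> R).

(* probability that, starting after the history [pre], the play follows the
   actions [h] and the game is not absorbed along them *)
Fixpoint reach_from (sigma : sprofile) (pre h : seq profile) : R :=
  match h with
  | [::] => 1
  | a :: t => prob_prof (fun j => sigma j pre) a * (1 - p a)
              * reach_from sigma (rcons pre a) t
  end.

Definition reach (sigma : sprofile) (h : seq profile) := reach_from sigma [::] h.

(* expected payoff of player i coming from absorption at stage n+1
   (i.e. after a non-absorbing history of length n) *)
Definition stage_payoff (i : I) (sigma : sprofile) (n : nat) : R :=
  \sum_(h : n.-tuple profile)
     reach sigma h * \sum_(a : profile)
        prob_prof (fun j => sigma j h) a * p a * r i a.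

(* undiscounted payoff gamma_i(sigma) = E[r_i(a^theta) 1_{theta < oo}] *)
Definition gamma (i : I) (sigma : sprofile) : R :=
  limn (series (stage_payoff i sigma)).

Definition gamma_dev (i : I) (sigma : sprofile) (tau : strat i) : R :=
  gamma i (@dfwith I strat sigma i tau).

Definition minmax (i : I) : R :=
  inf [set y : R | exists sigma : sprofile,
          (forall j, j != i -> is_strat j (sigma j)) /\
          y = sup [set z : R | exists tau : strat i,
                     is_strat i tau /\ z = gamma_dev i sigma tau]].

Definition stationary (x : forall j : I, {ffun A j -> R}) : sprofile :=
  fun j _ => x j.

End AbsorbingGame.

From HB Require Import structures.
From mathcomp Require Import all_boot all_order all_algebra.
From mathcomp Require Import all_classical all_reals all_analysis.
From mathcomp Require Import ring lra.
Import numFieldNormedType.Exports.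
Import Order.TTheory GRing.Theory Num.Theory.
Local Open Scope ring_scope.
Local Open Scope classical_set_scope.

(* For c >= 0 and mixed actions x of the opponents of player i, let F_c(x) be the
   largest expected one-stage excess E[p(a) (r_i(a) - c)] that a pure action of i
   can achieve against x.  Let w be the least c >= 0 such that F_c(x) <= 0 for some x;
   by compactness of the product of simplices and continuity of F, the infimum is
   attained.  Against that stationary x, every stage contributes at most w times the
   probability of absorbing there, so no strategy of i earns more than w.  Conversely,
   for c < w compactness gives F_c >= d > 0 uniformly, so against any sigma_{-i},
   replying at every history with a one-stage best reply to the current mixed actions
   absorbs with probability at least d per stage and earns at least c.  Hence w <= v_i. *)

Lemma big_tuple_cons (R : Type) (idx : R) (op : Monoid.com_law idx) (T : finType) n
    (F : n.+1.-tuple T -> R) :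
  \big[op/idx]_(t : n.+1.-tuple T) F t =
  \big[op/idx]_(x : T) \big[op/idx]_(t : n.-tuple T) F [tuple of x :: t].
Proof.
rewrite pair_big /= (reindex (fun xt : T * n.-tuple T => [tuple of xt.1 :: xt.2])) //.
exists (fun t : n.+1.-tuple T => (thead t, [tuple of behead t])) => [[x t] _|t _] /=.
  by congr pair; apply: val_inj.
by case/tupleP: t => x t; apply: val_inj.
Qed.

Lemma sum_prod_dffun (R : comPzSemiRingType) (I : finType) (A : I -> finType)
    (mu : forall i, {ffun A i -> R}) :
  \sum_(a : {dffun forall i, A i}) \prod_i mu i (a i) = \prod_i \sum_(b : A i) mu i b.
Proof.
rewrite (reindex (@dffun_of_fprod I A)); last first.
  by exists (@fprod_of_dffun I A) => x _; [exact: dffun_of_fprodK|exact: fprod_of_dffunK].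
under eq_bigr do under eq_bigr do rewrite ffunE.
rewrite (@big_fprod R 0 1 *%R +%R I A mu).
rewrite -(@bigA_distr_big_dep R 0 1 *%R +%R I _ (tagged_with A)
  (fun i t => untag 0 (mu i) t)).
by apply: eq_bigr => i _; rewrite (big_tag (fun i => mu i)).
Qed.

Lemma continuous_bigmax {R : realType} {T : topologicalType} {J : Type} (s : seq J)
    {g : T -> R} {F : J -> T -> R} :
  continuous g -> (forall j, continuous (F j)) ->
  continuous (fun v => \big[Num.max/g v]_(j <- s) F j v).
Proof.
move=> g_cont F_cont; elim: s => [|j s IHs] v.
  by under eq_fun do rewrite big_nil; exact: g_cont.
under eq_fun do rewrite big_cons.
apply: (@continuous_max _ _ (F j) (fun v => \big[Num.max/g v]_(j <- s) F j v)).
  exact: F_cont.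
exact: IHs.
Qed.

Section MixedProfiles.
Context {R : realType} {I : finType} {A : I -> finType}.

Local Notation mixed_profile := (forall j : I, {ffun A j -> R}).
Local Notation prob := (prob_prof R I A).

Definition is_mixed_profile (mu : mixed_profile) := forall j, is_mixed R (A j) (mu j).

Lemma mixed_le1 (T : finType) (m : {ffun T -> R}) t : is_mixed R T m -> m t <= 1.
Proof.
move=> [m_ge0 <-]; rewrite (bigD1 t) //= lerDl.
by apply: sumr_ge0 => u _; exact: m_ge0.
Qed.

Lemma uniform_mixed (T : finType) : (0 < #|T|)%N -> is_mixed R T [ffun _ => #|T|%:R^-1].
Proof.
move=> T_gt0; split => [t|]; first by rewrite ffunE invr_ge0 ler0n.
under eq_bigr do rewrite ffunE.
by rewrite sumr_const (_ : #|xpredT| = #|T|) // -[LHS]mulr_natl mulfV // pnatr_eq0 -lt0n.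
Qed.

Lemma prob_prof_ge0 mu : is_mixed_profile mu -> forall a, 0 <= prob mu a.
Proof. by move=> mu_mixed a; apply: prodr_ge0 => j _; case: (mu_mixed j). Qed.

Lemma sum_prob_prof mu : is_mixed_profile mu -> \sum_a prob mu a = 1.
Proof.
by move=> mu_mixed; rewrite sum_prod_dffun big1 // => j _; case: (mu_mixed j).
Qed.

Lemma prob_prof_mean_le mu (f g : profile I A -> R) : is_mixed_profile mu ->
  (forall a, f a <= g a) -> \sum_a prob mu a * f a <= \sum_a prob mu a * g a.
Proof.
move=> mu_mixed fg; apply: ler_sum => a _.
by rewrite ler_wpM2l // (prob_prof_ge0 _ mu_mixed a).
Qed.

Variable i : I.

Definition pure_action (b : A i) : {ffun A i -> R} := [ffun t => (t == b)%:R].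

Definition deviate (mu : mixed_profile) (b : A i) : mixed_profile :=
  @dfwith I (fun j => {ffun A j -> R}) mu i (pure_action b).

Lemma deviate_in mu b : deviate mu b i = pure_action b.
Proof. exact: dfwith_in. Qed.

Lemma deviate_out mu b j : i != j -> deviate mu b j = mu j.
Proof. exact: dfwith_out. Qed.

Lemma sum_pure_action (f : A i -> R) b : \sum_t f t * (t == b)%:R = f b.
Proof.
rewrite (bigD1 b) //= eqxx mulr1 big1 ?addr0 // => t /negbTE ->.
by rewrite mulr0.
Qed.

Lemma pure_action_mixed b : is_mixed R (A i) (pure_action b).
Proof.
split=> [t|]; first by rewrite ffunE ler0n.
by rewrite -[RHS](sum_pure_action (fun=> 1) b); apply: eq_bigr => t _; rewrite ffunE mul1r.
Qed.

Lemma deviate_mixed mu b :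
  (forall j, j != i -> is_mixed R (A j) (mu j)) -> is_mixed_profile (deviate mu b).
Proof.
move=> mu_mixed j; case: (eqVneq i j) => [<-|ij].
  by rewrite deviate_in; exact: pure_action_mixed.
by rewrite deviate_out //; apply: mu_mixed; rewrite eq_sym.
Qed.

Lemma deviate_eq mu nu b : (forall j, j != i -> mu j = nu j) ->
  deviate mu b = deviate nu b.
Proof.
move=> mu_nu; apply: functional_extensionality_dep => j.
case: (eqVneq i j) => [<-|ij]; first by rewrite !deviate_in.
by rewrite !deviate_out // mu_nu // eq_sym.
Qed.

(* Conditioning on the action of player [i]. *)
Lemma prob_prof_mean_deviate mu (g : profile I A -> R) :
  \sum_a prob mu a * g a = \sum_b mu i b * \sum_a prob (deviate mu b) a * g a.
Proof.
under [RHS]eq_bigr do rewrite mulr_sumr.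
rewrite exchange_big; apply: eq_bigr => a _ /=.
have prob_deviate b :
    prob (deviate mu b) a = pure_action b (a i) * \prod_(j | j != i) mu j (a j).
  rewrite /prob_prof (bigD1 i) //= deviate_in; congr (_ * _).
  by apply: eq_bigr => j ji; rewrite deviate_out // eq_sym.
rewrite (eq_bigr (fun b => mu i b * \prod_(j | j != i) mu j (a j) * g a * (b == a i)%:R)).
  by rewrite sum_pure_action /prob_prof (bigD1 i).
by move=> b _; rewrite prob_deviate ffunE eq_sym; ring.
Qed.

End MixedProfiles.

Section Player.
Variables (R : realType) (I : finType) (A : I -> finType).
Variables (r : I -> profile I A -> R) (p : profile I A -> R) (i : I).
Hypothesis p_range : forall a, 0 <= p a /\ p a <= 1.
Hypothesis r_range : forall a, 0 < r i a /\ r i a <= 1.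

Local Notation prob := (prob_prof R I A).
Local Notation profile := (profile I A).
Local Notation mixed_profile := (forall j : I, {ffun A j -> R}).

Definition excess (c : R) (a : profile) := p a * (r i a - c).

Lemma excess_le_p c a : 0 <= c -> excess c a <= p a.
Proof.
move=> c_ge0; have [p_ge0 p_le1] := p_range a; have [r_gt0 r_le1] := r_range a.
by rewrite /excess ler_piMr // lerBlDr (le_trans r_le1) // lerDl.
Qed.

Lemma excess1_le0 a : excess 1 a <= 0.
Proof.
have [p_ge0 _] := p_range a; have [_ r_le1] := r_range a.
by rewrite /excess mulr_ge0_le0 // subr_le0.
Qed.

Lemma mean_excess1_le0 mu : is_mixed_profile mu -> \sum_a prob mu a * excess 1 a <= 0.
Proof.
move=> mu_mixed; rewrite -oppr_ge0 -sumrN; apply: sumr_ge0 => a _; rewrite -mulrN.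
by rewrite mulr_ge0 ?(prob_prof_ge0 _ mu_mixed a) // oppr_ge0 excess1_le0.
Qed.

Section Play.
Variable sigma : sprofile R I A.
Hypothesis sigma_mixed : forall H, is_mixed_profile (fun j => sigma j H).

Definition stage_mean (g : profile -> R) H := \sum_a prob (fun j => sigma j H) a * g a.

Definition step_weight H a := prob (fun j => sigma j H) a * (1 - p a).

Definition reach_mean k pre (F : seq profile -> R) :=
  \sum_(h : k.-tuple profile) reach_from R I A p sigma pre h * F (pre ++ h).

Lemma step_weight_ge0 H a : 0 <= step_weight H a.
Proof.
apply: mulr_ge0; first exact: (prob_prof_ge0 _ (sigma_mixed H) a).
by rewrite subr_ge0; case: (p_range a).
Qed.

Lemma sum_step_weight H : \sum_a step_weight H a = 1 - stage_mean p H.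
Proof.
rewrite /step_weight /stage_mean; under eq_bigr do rewrite mulrBr mulr1.
by rewrite sumrB (sum_prob_prof _ (sigma_mixed H)).
Qed.

Lemma stage_mean_p_le1 H : stage_mean p H <= 1.
Proof.
rewrite -(sum_prob_prof _ (sigma_mixed H)) /stage_mean; apply: ler_sum => a _.
by rewrite ler_piMr ?(prob_prof_ge0 _ (sigma_mixed H) a) //; case: (p_range a).
Qed.

Lemma reach_mean0 pre F : reach_mean 0 pre F = F pre.
Proof.
rewrite /reach_mean (big_pred1 [tuple]) /=; first by rewrite cats0 mul1r.
by move=> t; rewrite /= (tuple0 t); apply/esym/eqP.
Qed.

Lemma reach_meanS k pre F :
  reach_mean k.+1 pre F = \sum_a step_weight pre a * reach_mean k (rcons pre a) F.
Proof.
rewrite /reach_mean big_tuple_cons; apply: eq_bigr => a _; rewrite mulr_sumr.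
by apply: eq_bigr => t _ /=; rewrite -cat_rcons /step_weight !mulrA.
Qed.

Lemma reach_mean_ge0 k pre F : (forall H, 0 <= F H) -> 0 <= reach_mean k pre F.
Proof.
move=> F_ge0; elim: k pre => [|k IHk] pre; first by rewrite reach_mean0.
rewrite reach_meanS; apply: sumr_ge0 => a _.
by apply: mulr_ge0; [exact: step_weight_ge0|exact: IHk].
Qed.

Lemma reach_mean_lin k pre F G c :
  reach_mean k pre (fun H => F H + c * G H) = reach_mean k pre F + c * reach_mean k pre G.
Proof.
rewrite /reach_mean mulr_sumr -big_split; apply: eq_bigr => h _ /=.
by rewrite mulrDr mulrCA.
Qed.

Lemma reach_meanN k pre F : reach_mean k pre (fun H => - F H) = - reach_mean k pre F.
Proof. by rewrite /reach_mean -sumrN; apply: eq_bigr => h _; rewrite mulrN. Qed.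

Lemma sum_reach_mean_absorb N pre :
  \sum_(k < N) reach_mean k pre (stage_mean p) = 1 - reach_mean N pre (fun=> 1).
Proof.
elim: N pre => [|N IHN] pre; first by rewrite big_ord0 reach_mean0 subrr.
rewrite big_ord_recl reach_mean0 reach_meanS.
under eq_bigr do rewrite reach_meanS.
rewrite exchange_big /=.
under eq_bigr do rewrite -mulr_sumr IHN mulrBr mulr1.
by rewrite sumrB sum_step_weight; ring.
Qed.

Lemma survival_le d N pre : 0 <= d -> (forall H, d <= stage_mean p H) ->
  reach_mean N pre (fun=> 1) <= (1 - d) ^+ N.
Proof.
move=> d_ge0 d_le; have d_le1 : d <= 1 := le_trans (d_le [::]) (stage_mean_p_le1 _).
elim: N pre => [|N IHN] pre; first by rewrite reach_mean0 expr0.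
rewrite reach_meanS exprS.
apply: (@le_trans _ _ (\sum_a step_weight pre a * (1 - d) ^+ N)).
  by apply: ler_sum => a _; apply: ler_wpM2l; [exact: step_weight_ge0|exact: IHN].
by rewrite -mulr_suml sum_step_weight ler_wpM2r ?exprn_ge0 ?subr_ge0 // lerB.
Qed.

Lemma stage_payoff_reach_mean k :
  stage_payoff R I A r p i sigma k = reach_mean k [::] (stage_mean (fun a => p a * r i a)).
Proof. by apply: eq_bigr => h _; congr (_ * _); apply: eq_bigr => a _; rewrite mulrA. Qed.

Lemma stage_payoff_ge0 k : 0 <= stage_payoff R I A r p i sigma k.
Proof.
rewrite stage_payoff_reach_mean; apply: reach_mean_ge0 => H; apply: sumr_ge0 => a _.
have [p_ge0 _] := p_range a; have [r_gt0 _] := r_range a.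
apply: mulr_ge0; first exact: (prob_prof_ge0 _ (sigma_mixed H) a).
exact: mulr_ge0 p_ge0 (ltW r_gt0).
Qed.

Lemma series_stage_payoff_split c N :
  series (stage_payoff R I A r p i sigma) N =
  \sum_(k < N) reach_mean k [::] (stage_mean (excess c)) +
  c * (1 - reach_mean N [::] (fun=> 1)).
Proof.
rewrite -sum_reach_mean_absorb mulr_sumr -big_split /series /= big_mkord.
apply: eq_bigr => k _ /=; rewrite stage_payoff_reach_mean -reach_mean_lin.
apply: eq_bigr => h _ /=; congr (_ * _).
rewrite /stage_mean mulr_sumr -big_split; apply: eq_bigr => a _ /=.
by rewrite /excess; ring.
Qed.

Lemma series_stage_payoff_le c N : 0 <= c -> (forall H, stage_mean (excess c) H <= 0) ->
  series (stage_payoff R I A r p i sigma) N <= c.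
Proof.
move=> c_ge0 excess_le0; rewrite (series_stage_payoff_split c).
have mean_le0 : \sum_(k < N) reach_mean k [::] (stage_mean (excess c)) <= 0.
  rewrite -oppr_ge0 -sumrN; apply: sumr_ge0 => k _.
  by rewrite -reach_meanN; apply: reach_mean_ge0 => H; rewrite oppr_ge0.
have survival_ge0 : 0 <= reach_mean N [::] (fun=> 1) by apply: reach_mean_ge0.
by rewrite -[leRHS]add0r lerD // ler_piMr // lerBlDr lerDl.
Qed.

Lemma series_stage_payoff_cvg : cvgn (series (stage_payoff R I A r p i sigma)).
Proof.
apply: nondecreasing_is_cvgn.
  by apply: nondecreasing_series => n _ _; exact: stage_payoff_ge0.
exists 1 => _ [n _ <-].
by apply: series_stage_payoff_le => // H; exact: mean_excess1_le0 (sigma_mixed H).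
Qed.

Lemma gamma_ge0 : 0 <= gamma R I A r p i sigma.
Proof.
apply: limr_ge; first exact: series_stage_payoff_cvg.
by apply: nearW => n; apply: sumr_ge0 => k _; exact: stage_payoff_ge0.
Qed.

Lemma gamma_le c : 0 <= c -> (forall H, stage_mean (excess c) H <= 0) ->
  gamma R I A r p i sigma <= c.
Proof.
move=> c_ge0 excess_le0; apply: limr_le; first exact: series_stage_payoff_cvg.
by apply: nearW => n; exact: series_stage_payoff_le.
Qed.

(* A uniformly positive expected excess forces absorption with probability at least
   [d] at every stage, so the partial payoffs exceed [c - c (1 - d)^N]. *)
Lemma gamma_ge c d : 0 <= c -> 0 < d -> (forall H, d <= stage_mean (excess c) H) ->
  c <= gamma R I A r p i sigma.
Proof.
move=> c_ge0 d_gt0 excess_ge.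
have absorb_ge H : d <= stage_mean p H.
  apply: le_trans (excess_ge H) _; apply: prob_prof_mean_le => // a.
  exact: excess_le_p.
have partial_ge N : c - c * (1 - d) ^+ N <= series (stage_payoff R I A r p i sigma) N.
  rewrite (series_stage_payoff_split c) mulrBr mulr1 -[leLHS]add0r lerD //.
    apply: sumr_ge0 => k _; apply: reach_mean_ge0 => H.
    exact: le_trans (ltW d_gt0) (excess_ge H).
  by rewrite lerB // ler_wpM2l // survival_le // ltW.
have d_le1 : d <= 1 by apply: le_trans (absorb_ge [::]) (stage_mean_p_le1 _).
apply: (@cvgr_to_le _ \oo _ _ (fun N => c - c * (1 - d) ^+ N)).
  rewrite -[X in _ --> X]subr0 -(mulr0 c).
  apply: cvgB; first exact: cvg_cst.
  apply: cvgM; first exact: cvg_cst.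
  by apply: cvg_expr; rewrite ger0_norm ?subr_ge0 // ltrBlDr ltrDl.
apply: nearW => N; apply: le_trans (partial_ge N) _.
apply: nondecreasing_cvgn_le; last exact: series_stage_payoff_cvg.
by apply: nondecreasing_series => n _ _; exact: stage_payoff_ge0.
Qed.

End Play.

Lemma dfwith_strat_in (sigma : sprofile R I A) (tau : strat R I A i) :
  @dfwith I (strat R I A) sigma i tau i = tau.
Proof. exact: dfwith_in. Qed.

Lemma dfwith_strat_out (sigma : sprofile R I A) (tau : strat R I A i) j :
  i != j -> @dfwith I (strat R I A) sigma i tau j = sigma j.
Proof. exact: dfwith_out. Qed.

Lemma dfwith_strat_mixed (sigma : sprofile R I A) (tau : strat R I A i) :
  (forall j, j != i -> is_strat R I A j (sigma j)) -> is_strat R I A i tau ->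
  forall H, is_mixed_profile (fun j => @dfwith I (strat R I A) sigma i tau j H).
Proof.
move=> sigma_strat tau_strat H j; case: (eqVneq i j) => [<-|ij].
  by rewrite dfwith_strat_in; exact: tau_strat.
by rewrite dfwith_strat_out //; apply: sigma_strat; rewrite eq_sym.
Qed.

Section Level.
Variable b0 : A i.
Hypothesis A_n0 : forall j, (0 < #|A j|)%N.

Definition dev_excess c (x : mixed_profile) b := \sum_a prob (deviate i x b) a * excess c a.

Definition best_excess c x := \big[Num.max/dev_excess c x b0]_b dev_excess c x b.

Definition best_reply c x := [arg max_(b > b0) dev_excess c x b]%O.

Lemma dev_excess_eq c x y b : (forall j, j != i -> x j = y j) ->
  dev_excess c x b = dev_excess c y b.
Proof. by move=> xy; rewrite /dev_excess (deviate_eq _ _ _ b xy). Qed.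

Lemma best_excess_eq c x y : (forall j, j != i -> x j = y j) ->
  best_excess c x = best_excess c y.
Proof.
move=> xy; rewrite /best_excess.
by have -> : dev_excess c x = dev_excess c y by apply/funext => b; exact: dev_excess_eq.
Qed.

Lemma le_best_excess c x b : dev_excess c x b <= best_excess c x.
Proof. exact: le_bigmax. Qed.

Lemma best_excess_reply c x : best_excess c x = dev_excess c x (best_reply c x).
Proof.
rewrite /best_reply; case: arg_maxP => // b _ b_max.
apply/le_anti; rewrite le_best_excess andbT.
by apply: bigmax_le => [|t _]; exact: b_max.
Qed.

Lemma dev_excess_shift w c x b : (forall j, j != i -> is_mixed R (A j) (x j)) ->
  w <= c -> dev_excess w x b - (c - w) <= dev_excess c x b.
Proof.
move=> x_mixed wc; have dev_mixed := deviate_mixed _ _ b x_mixed.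
have -> : dev_excess c x b =
    dev_excess w x b - (c - w) * \sum_a prob (deviate i x b) a * p a.
  rewrite /dev_excess mulr_sumr -sumrB; apply: eq_bigr => a _; rewrite /excess; ring.
rewrite lerB // ler_piMr ?subr_ge0 // -(sum_prob_prof _ dev_mixed).
apply: ler_sum => a _.
by rewrite ler_piMr ?(prob_prof_ge0 _ dev_mixed a) //; case: (p_range a).
Qed.

Lemma best_excess_shift w c x : (forall j, j != i -> is_mixed R (A j) (x j)) ->
  w <= c -> best_excess w x - (c - w) <= best_excess c x.
Proof.
move=> x_mixed wc; rewrite [best_excess w x]best_excess_reply.
exact: le_trans (dev_excess_shift _ _ _ _ x_mixed wc) (le_best_excess c x _).
Qed.

(* Mixed profiles are encoded as row vectors indexed by the pairs (player, action). *)
Definition n_actions := #|{: {j : I & A j}}|.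
Local Notation n := n_actions.

Definition profile_of_row (v : 'rV[R]_n) : mixed_profile :=
  fun j => [ffun a => v ord0 (enum_rank (Tagged (fun j => A j) a))].

Definition row_of_profile (x : mixed_profile) : 'rV[R]_n :=
  \row_k x (tag (enum_val k)) (tagged (enum_val k)).

Lemma row_of_profileK : cancel row_of_profile profile_of_row.
Proof.
move=> x; apply: functional_extensionality_dep => j; apply/ffunP => t.
by rewrite ffunE mxE enum_rankK.
Qed.

Definition mixed_rows : set 'rV[R]_n :=
  [set v : 'rV[R]_n | forall k, `[(0 : R), 1]%classic (v ord0 k)] `&`
  [set v : 'rV[R]_n | forall j, \sum_a profile_of_row v j a = 1].

Lemma mixed_rowsP v : mixed_rows v -> is_mixed_profile (profile_of_row v).
Proof.
move=> [v_box v_sum] j; split => // t; rewrite ffunE.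
by have := v_box (enum_rank (Tagged (fun j => A j) t)); rewrite /= in_itv /= => /andP[].
Qed.

Lemma row_of_profile_mixed x : is_mixed_profile x -> mixed_rows (row_of_profile x).
Proof.
move=> x_mixed; split => [k|j] /=; last by rewrite row_of_profileK; case: (x_mixed j).
rewrite mxE in_itv /=; case: (x_mixed (tag (enum_val k))) => x_ge0 _.
by rewrite x_ge0 mixed_le1.
Qed.

Lemma mixed_rows_n0 : mixed_rows !=set0.
Proof.
exists (row_of_profile (fun j => [ffun _ => #|A j|%:R^-1])).
by apply: row_of_profile_mixed => j; exact: uniform_mixed.
Qed.

Lemma continuous_profile_of_row j t : continuous (fun v => profile_of_row v j t).
Proof. by under eq_fun do rewrite ffunE; exact: coord_continuous. Qed.

Lemma mixed_rows_compact : compact mixed_rows.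
Proof.
rewrite /mixed_rows; apply: compact_closedI.
  by apply: (@rV_compact R n (fun=> `[(0 : R), 1]%classic)) => _; exact: segment_compact.
have -> : [set v : 'rV[R]_n | forall j, \sum_a profile_of_row v j a = 1] =
    \bigcap_(j in setT) ((fun v => \sum_a profile_of_row v j a) @^-1` [set 1]).
  by apply/seteqP; split => v /= v_sum j; [move=> _|]; exact: v_sum.
apply: closed_bigI => j _; apply: preimage_closed; last exact: closed_eq.
move=> v _; apply: continuous_big => [|a _]; first exact: add_continuous.
exact: continuous_profile_of_row.
Qed.

Lemma continuous_prob_deviate b a :
  continuous (fun v => prob (deviate i (profile_of_row v) b) a).
Proof.
apply: continuous_big => [|j _]; first exact: mul_continuous.
case: (eqVneq i j) => [<-|ij].
  by under eq_fun do rewrite deviate_in; exact: cst_continuous.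
by under eq_fun do rewrite deviate_out //; exact: continuous_profile_of_row.
Qed.

Lemma continuous_dev_excess c b : continuous (fun v => dev_excess c (profile_of_row v) b).
Proof.
apply: continuous_big => [|a _ v]; first exact: add_continuous.
apply: (@continuousM R _ _ (fun=> excess c a)); first exact: continuous_prob_deviate.
exact: cst_continuous.
Qed.

Lemma continuous_best_excess c : continuous (fun v => best_excess c (profile_of_row v)).
Proof. exact: continuous_bigmax (continuous_dev_excess c b0) (continuous_dev_excess c). Qed.

Lemma best_excess_min c : exists2 v, mixed_rows v &
  forall t, mixed_rows t ->
    best_excess c (profile_of_row v) <= best_excess c (profile_of_row t).
Proof.
have [v v_rows v_min] := compact_EVT_min mixed_rows_n0 mixed_rows_compact
  (@continuous_subspaceT _ _ mixed_rows _ (continuous_best_excess c)).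
by exists v; [rewrite inE in v_rows|move=> t t_rows; apply: v_min; rewrite inE].
Qed.

Definition level_set : set R :=
  [set c | 0 <= c /\ exists2 v, mixed_rows v & best_excess c (profile_of_row v) <= 0].

Definition level := inf level_set.

Lemma level_set_n0 : level_set !=set0.
Proof.
have [v v_rows] := mixed_rows_n0; exists 1; split => //; exists v => //.
by apply: bigmax_le => [|b _]; apply/mean_excess1_le0/deviate_mixed => j _;
  exact: mixed_rowsP _ v_rows j.
Qed.

Lemma level_ge0 : 0 <= level.
Proof. by apply: lb_le_inf level_set_n0 _ => c []. Qed.

(* If the minimum [m] of [best_excess level] were positive, the shift inequality
   would give [level + m <= c] for every admissible [c]. *)
Lemma level_attained : exists2 v, mixed_rows v & best_excess level (profile_of_row v) <= 0.
Proof.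
have [v v_rows v_min] := best_excess_min level; exists v => //.
rewrite leNgt; apply/negP => m_gt0.
suff : level + best_excess level (profile_of_row v) <= level by lra.
apply: lb_le_inf level_set_n0 _ => c [c_ge0 [t t_rows t_le0]].
have level_le_c : level <= c.
  by apply: ge_inf; [exists 0 => y []|split => //; exists t].
have := best_excess_shift _ _ _ (fun j _ => mixed_rowsP _ t_rows j) level_le_c.
by have := v_min t t_rows; lra.
Qed.

Lemma best_excess_below_level c : 0 <= c -> c < level ->
  exists2 d, 0 < d & forall x, (forall j, j != i -> is_mixed R (A j) (x j)) ->
    d <= best_excess c x.
Proof.
move=> c_ge0 c_lt; have [v v_rows v_min] := best_excess_min c.
exists (best_excess c (profile_of_row v)).
  rewrite ltNge; apply/negP => v_le0.
  suff : level <= c by lra.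
  by apply: ge_inf; [exists 0 => y []|split => //; exists v].
move=> x x_mixed; rewrite (best_excess_eq c x (deviate i x b0)) => [|j ji].
  rewrite -[deviate i x b0]row_of_profileK; apply: v_min.
  exact/row_of_profile_mixed/deviate_mixed.
by rewrite deviate_out // eq_sym.
Qed.

Lemma stage_mean_dfwith sigma tau c H :
  stage_mean (@dfwith I (strat R I A) sigma i tau) (excess c) H =
  \sum_b tau H b * dev_excess c (fun j => sigma j H) b.
Proof.
rewrite /stage_mean (prob_prof_mean_deviate i) dfwith_strat_in.
apply: eq_bigr => b _; congr (_ * _); apply: eq_bigr => a _; congr (_ * _).
by congr prob_prof; apply: deviate_eq => j ji; rewrite dfwith_strat_out // eq_sym.
Qed.

Lemma gamma_dev_stationary_le x tau : is_mixed_profile x -> is_strat R I A i tau ->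
  (forall b, dev_excess level x b <= 0) ->
  gamma_dev R I A r p i (stationary R I A x) tau <= level.
Proof.
move=> x_mixed tau_strat x_le0.
have stat_strat j : j != i -> is_strat R I A j (stationary R I A x j) by move=> _ H.
apply: (gamma_le _ (dfwith_strat_mixed _ _ stat_strat tau_strat) _ level_ge0) => H.
rewrite stage_mean_dfwith -oppr_ge0 -sumrN; apply: sumr_ge0 => b _.
by rewrite -mulrN mulr_ge0 ?oppr_ge0 ?x_le0 //; case: (tau_strat H).
Qed.

Lemma gamma_dev_best_reply_ge sigma c :
  (forall j, j != i -> is_strat R I A j (sigma j)) -> 0 <= c -> c < level ->
  exists2 tau, is_strat R I A i tau & c <= gamma_dev R I A r p i sigma tau.
Proof.
move=> sigma_strat c_ge0 c_lt; have [d d_gt0 d_le] := best_excess_below_level _ c_ge0 c_lt.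
pose tau : strat R I A i := fun H => pure_action i (best_reply c (fun j => sigma j H)).
have tau_strat : is_strat R I A i tau by move=> H; exact: pure_action_mixed.
exists tau => //.
apply: (gamma_ge _ (dfwith_strat_mixed _ _ sigma_strat tau_strat) c d c_ge0 d_gt0) => H.
rewrite stage_mean_dfwith.
under eq_bigr do rewrite /tau ffunE mulrC.
rewrite sum_pure_action -best_excess_reply; apply: d_le => j ji.
exact: sigma_strat.
Qed.

Lemma level_le_minmax : level <= minmax R I A r p i.
Proof.
have [v v_rows _] := level_attained; have v_mixed := mixed_rowsP _ v_rows.
apply: lb_le_inf => [|_ [sigma [sigma_strat ->]]].
  by eexists; exists (stationary R I A (profile_of_row v)); split => // j _ H.
have dev_mixed := dfwith_strat_mixed _ _ sigma_strat.
set Z := [set z | _].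
have Z_ub : has_ubound Z.
  exists 1 => _ [tau [tau_strat ->]].
  apply: (gamma_le _ (dev_mixed _ tau_strat) _ ler01).
  by move=> H; exact: mean_excess1_le0 (dev_mixed _ tau_strat H).
pose tau0 : strat R I A i := fun=> pure_action i b0.
have tau0_strat : is_strat R I A i tau0 by move=> H; exact: pure_action_mixed.
have Z_ge0 : 0 <= sup Z.
  apply: le_trans (ub_le_sup Z_ub (ex_intro _ tau0 (conj tau0_strat erefl))).
  exact: gamma_ge0 _ (dev_mixed _ tau0_strat).
rewrite leNgt; apply/negP => Z_lt.
have mid_ge0 : 0 <= (sup Z + level) / 2 by lra.
have mid_lt : (sup Z + level) / 2 < level by lra.
have [tau tau_strat] := gamma_dev_best_reply_ge _ _ sigma_strat mid_ge0 mid_lt.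
by have := ub_le_sup Z_ub (ex_intro _ tau (conj tau_strat erefl)); lra.
Qed.

Lemma exists_stationary_minmax : exists x : mixed_profile,
  (forall j, j != i -> is_mixed R (A j) (x j)) /\
  forall tau, is_strat R I A i tau ->
    gamma_dev R I A r p i (stationary R I A x) tau <= minmax R I A r p i.
Proof.
have [v v_rows v_le0] := level_attained; have v_mixed := mixed_rowsP _ v_rows.
exists (profile_of_row v); split=> [j _|tau tau_strat]; first exact: v_mixed.
apply: le_trans level_le_minmax.
apply: gamma_dev_stationary_le v_mixed tau_strat _ => b.
exact: le_trans (le_best_excess _ _ b) v_le0.
Qed.

End Level.
End Player.

Theorem mainTheorem3 (R : realType) (I : finType) (A : I -> finType)
  (r : I -> profile I A -> R) (p : profile I A -> R)
  (hA : forall i, (0 < #|A i|)%N)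
  (hr : forall i a, 0 < r i a /\ r i a <= 1)
  (hp : forall a, 0 <= p a /\ p a <= 1) :
  forall i : I, exists x : forall j : I, {ffun A j -> R},
    (forall j, j != i -> is_mixed R (A j) (x j)) /\
    forall tau : strat R I A i, is_strat R I A i tau ->
      gamma_dev R I A r p i (stationary R I A x) tau <= minmax R I A r p i.
Proof.
move=> i; have [b0 _] : exists b : A i, b \in A i by apply/card_gt0P; exact: hA.
exact: (@exists_stationary_minmax R I A r p i hp (hr i) b0 hA).
Qed.
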